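(* Let $\mathcal{E}=(\mathbf{R},\mathbf{S},\Sigma_{st},\mathbf{F})$ be a constructive relational to RDF data exchange setting with $\mathbf{S}=(\mathcal{T},\delta)$. For any instance $I$ of $\mathcal{R}$ and any typed graph $J$ that is a solution for $I$ to $\Sigma_{st}\cup\Sigma^{TP}_{\mathbf{S}}\cup\Sigma^{PF}_{\mathbf{S}}$, if $N_J$ contains a set $X$ with $\{\mathit{Literal},T\}\subseteq X$ for some $T\in\mathcal{T}$, then $I$ does not admit a solution to $\mathcal{E}$ that includes $J$.
   Context: Values: $\mathsf{Iri}$ (IRIs, containing predicates $\mathsf{Pred}$), $\mathsf{NullIri}$, $\mathsf{Lit}$ with null literals $\mathsf{NullLit}\subseteq\mathsf{Lit}$. A typed graph: finite set of facts $\mathit{Triple}(s,p,o)$ ($s\in\mathsf{Iri}\cup\mathsf{NullIri}$, $p\in\mathsf{Pred}$, $o\in\mathsf{Iri}\cup\mathsf{NullIri}\cup\mathsf{Lit}$) plus type facts $T(n)$ ($T\in\mathcal{T}$) and $\mathit{Literal}(n)$; literal nodes may only have type $\mathit{Literal}$, non-literal nodes only types in $\mathcal{T}$; $\mathit{types}_G(n)=\{T\mid T(n)\in G\}$. Deterministic shape schema $\mathbf{S}=(\mathcal{T},\delta)$, $\delta:\mathcal{T}\times\mathsf{Pred}\rightharpoonup(\mathcal{T}\cup\{\mathit{Literal}\})\times\{1,?,*,+\}$, $\delta(T,p)=S^\mu$. $\Sigma^{TP}_{\mathbf{S}}$ consists of the rules $T(x)\land\mathit{Triple}(x,p,y)\Rightarrow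 S(y)$ for each $\delta(T,p)=S^\mu$; $\Sigma^{PF}_{\mathbf{S}}$ of the rules $T(x)\land\mathit{Triple}(x,p,y_1)\land\mathit{Triple}(x,p,y_2)\Rightarrow y_1=y_2$ for each $\delta(T,p)=S^\mu$ with $\mu\in\{1,?\}$; $\mathbf{S}$ additionally requires (PE) $T(x)\Rightarrow\exists y.\,\mathit{Triple}(x,p,y)$ when $\mu\in\{1,+\}$. Constructive setting: $\mathbf{R}=(\mathcal{R},\Sigma_{fd})$ relational schema; IRI constructors $f\in\mathcal{F}$ interpreted as $f^F:\mathsf{Lit}^n\to\mathsf{Iri}$ with pairwise disjoint ranges; st-tgds full, $\forall\bar x.\,\varphi\Rightarrow\psi$ with $\varphi$ a conjunction of atoms over $\mathcal{R}$ and $\psi$ a conjunction of atoms $\mathit{Triple}(t_1,p,t_2)$, $T(t)$, $\mathit{Literal}(t)$ with terms variables or $f(\bar u)$. A solution for $I$ to a set of dependencies is a typed graph $J$ such that $I\cup J$ (function symbols interpreted by $F$) satisfies them; a solution to $\mathcal{E}$ is a typed graph satisfying $\mathbf{S}$ and $\Sigma_{st}$ together with $I$. Let $\mathit{Req}(X)=\{p\mid \exists T\in X,S,\mu\in\{1,+\}: \delta(T,p)=S^\mu\}$ and $\Delta(X,p)=\{S\mid\exists T\in X,\mu: \delta(T,p)=S^\mu\}$. The frontier of $J$ is $\mathbb{F}=\{(n,p)\mid n$ a node of $J$, $p\in\mathit{Req}(\mathit{types}_J(n))$, no $\mathit{Triple}(n,p,m)\in J\}$. Let $N_0=\{\Delta(\mathit{types}_J(n),p)\mid(n,p)\in\mathbb{F}\}$,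 $N_i=\{\Delta(X,p)\mid X\in N_{i-1},p\in\mathit{Req}(X)\}$ for $i\ge1$, and $N_J=\bigcup_{i\ge0}N_i$. *)

From Stdlib Require Import List.
Import ListNotations.
Set Implicit Arguments.

(** Multiplicities {1, ?, *, +}. *)
Inductive mult := M1 | MOpt | MStar | MPlus.
Definition mult_req (m : mult) : Prop := m = M1 \/ m = MPlus.
Definition mult_func (m : mult) : Prop := m = M1 \/ m = MOpt.

Inductive ty (TN : Type) := TyLit | TyT (T : TN).
Arguments TyLit {TN}.
Arguments TyT {TN} T.

(** Value domains: Iri (with predicates Pred ⊆ Iri), NullIri, Lit with NullLit ⊆ Lit. *)
Record domains := {
  Iri : Type;
  NullIri : Type;
  Lit : Type;
  NullLit : Lit -> Prop;
  Pred : Type;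
  pred_iri : Pred -> Iri;
  pred_iri_inj : forall p q, pred_iri p = pred_iri q -> p = q }.

Inductive node (D : domains) :=
| NIri (i : Iri D) | NNull (b : NullIri D) | NLit (l : Lit D).
Arguments NIri {D} i.
Arguments NNull {D} b.
Arguments NLit {D} l.

Definition is_lit_node D (n : node D) : Prop :=
  match n with NLit _ => True | _ => False end.

(** Deterministic shape schema S = (𝒯, δ), δ partial on 𝒯 × Pred. *)
Record shape_schema (D : domains) := {
  TN : Type;
  delta : TN -> Pred D -> option (ty TN * mult) }.

Inductive fact (D : domains) (TN : Type) :=
| Triple (s : node D) (p : Pred D) (o : node D)
| TypeF (T : TN) (n : node D)
| LitF (n : node D).
Arguments Triple {D TN} s p o.
Arguments TypeF {D TN} T n.
Arguments LitF {D TN} n.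

Definition typed_graph (D : domains) (TN : Type) := list (fact D TN).

Definition typed_graph_wf D TN (G : typed_graph D TN) : Prop :=
  forall f, In f G ->
    match f with
    | Triple s _ _ => ~ is_lit_node s
    | TypeF _ n => ~ is_lit_node n
    | LitF n => is_lit_node n
    end.

Record fd (Rel : Type) := { fd_rel : Rel; fd_lhs : list nat; fd_rhs : list nat }.
Record rel_schema := {
  Rel : Type;
  arity : Rel -> nat;
  fds : list (fd Rel) }.

Definition instance (RS : rel_schema) (L : Type) := list (Rel RS * list L).
Definition instance_of (RS : rel_schema) L (I : instance RS L) : Prop :=
  forall R t, In (R, t) I -> length t = arity RS R.

Record constructors (D : domains) := {
  Fn : Type;
  farity : Fn -> nat;
  finterp : Fn -> list (Lit D) -> Iri D;
  finterp_disjoint : forall f g u v,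
      length u = farity f -> length v = farity g ->
      finterp f u = finterp g v -> f = g }.

Inductive term (Fn : Type) := TVar (x : nat) | TFun (f : Fn) (us : list nat).
Arguments TVar {Fn} x.
Arguments TFun {Fn} f us.

Inductive hatom (P TN Fn : Type) :=
| HTriple (t1 : term Fn) (p : P) (t2 : term Fn)
| HType (T : TN) (t : term Fn)
| HLit (t : term Fn).
Arguments HTriple {P TN Fn} t1 p t2.
Arguments HType {P TN Fn} T t.
Arguments HLit {P TN Fn} t.

Record tgd (Rel P TN Fn : Type) := {
  body : list (Rel * list nat);
  head : list (hatom P TN Fn) }.

Definition term_vars Fn (t : term Fn) : list nat :=
  match t with TVar x => [x] | TFun f us => us end.

Definition hatom_terms P TN Fn (a : hatom P TN Fn) : list (term Fn) :=
  match a with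
  | HTriple t1 _ t2 => [t1; t2]
  | HType _ t => [t]
  | HLit t => [t]
  end.

Definition tgd_wf Rel P TN Fn (ar : Rel -> nat) (far : Fn -> nat)
    (r : tgd Rel P TN Fn) : Prop :=
  (forall R xs, In (R, xs) (body r) -> length xs = ar R) /\
  (forall a t, In a (head r) -> In t (hatom_terms a) ->
     (forall f us, t = TFun f us -> length us = far f) /\
     (forall x, In x (term_vars t) -> exists R xs, In (R, xs) (body r) /\ In x xs)).

Record setting (D : domains) := {
  RS : rel_schema;
  SS : shape_schema D;
  CF : constructors D;
  st : list (tgd (Rel RS) (Pred D) (TN SS) (Fn CF));
  st_wf : forall r, In r st -> tgd_wf (arity RS) (@farity D CF) r }.

Section Semantics.
Context {D : domains} (E : setting D).
Local Notation TNs := (TN (SS E)).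
Local Notation graph := (typed_graph D TNs).
Local Notation dlt := (delta (SS E)).

Definition eval_term (nu : nat -> Lit D) (t : term (Fn (CF E))) : node D :=
  match t with
  | TVar x => NLit (nu x)
  | TFun f us => NIri (finterp (CF E) f (map nu us))
  end.

Definition eval_hatom (nu : nat -> Lit D)
    (a : hatom (Pred D) TNs (Fn (CF E))) : fact D TNs :=
  match a with
  | HTriple t1 p t2 => Triple (eval_term nu t1) p (eval_term nu t2)
  | HType T t => TypeF T (eval_term nu t)
  | HLit t => LitF (eval_term nu t)
  end.

Definition sat_tgd (I : instance (RS E) (Lit D)) (J : graph)
    (r : tgd (Rel (RS E)) (Pred D) TNs (Fn (CF E))) : Prop :=
  forall nu : nat -> Lit D,
    (forall R xs, In (R, xs) (body r) -> In (R, map nu xs) I) ->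
    forall a, In a (head r) -> In (eval_hatom nu a) J.

Definition sat_st (I : instance (RS E) (Lit D)) (J : graph) : Prop :=
  forall r, In r (st E) -> sat_tgd I J r.

Definition tyfact (S : ty TNs) (n : node D) : fact D TNs :=
  match S with TyLit => LitF n | TyT T => TypeF T n end.

Definition sat_TP (G : graph) : Prop :=
  forall T p S mu, dlt T p = Some (S, mu) ->
    forall x y, In (TypeF T x) G -> In (Triple x p y) G -> In (tyfact S y) G.

Definition sat_PF (G : graph) : Prop :=
  forall T p S mu, dlt T p = Some (S, mu) -> mult_func mu ->
    forall x y1 y2, In (TypeF T x) G -> In (Triple x p y1) G ->
      In (Triple x p y2) G -> y1 = y2.

Definition sat_PE (G : graph) : Prop :=
  forall T p S mu, dlt T p = Some (S, mu) -> mult_req mu ->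
    forall x, In (TypeF T x) G -> exists y, In (Triple x p y) G.

Definition sat_shape (G : graph) : Prop := sat_TP G /\ sat_PF G /\ sat_PE G.

Definition solution_E (I : instance (RS E) (Lit D)) (K : graph) : Prop :=
  typed_graph_wf K /\ sat_st I K /\ sat_shape K.

Definition solution_st_TP_PF (I : instance (RS E) (Lit D)) (J : graph) : Prop :=
  typed_graph_wf J /\ sat_st I J /\ sat_TP J /\ sat_PF J.

Definition node_of (G : graph) (n : node D) : Prop :=
  exists f, In f G /\
    match f with
    | Triple s _ o => n = s \/ n = o
    | TypeF _ m => n = m
    | LitF m => n = m
    end.

Definition types (G : graph) (n : node D) : ty TNs -> Prop :=
  fun S => In (tyfact S n) G.

Definition Req (X : ty TNs -> Prop) (p : Pred D) : Prop :=
  exists T S mu, X (TyT T) /\ dlt T p = Some (S, mu) /\ mult_req mu.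

Definition Delta (X : ty TNs -> Prop) (p : Pred D) : ty TNs -> Prop :=
  fun S => exists T mu, X (TyT T) /\ dlt T p = Some (S, mu).

Definition frontier (G : graph) (n : node D) (p : Pred D) : Prop :=
  node_of G n /\ Req (types G n) p /\ forall m, ~ In (Triple n p m) G.

(** N_i (sets of type labels, up to extensional equality) and N_J = ⋃ N_i. *)
Fixpoint Nlev (G : graph) (i : nat) (X : ty TNs -> Prop) : Prop :=
  match i with
  | O => exists n p, frontier G n p /\ forall S, X S <-> Delta (types G n) p S
  | S i' => exists Y p, Nlev G i' Y /\ Req Y p /\ forall S, X S <-> Delta Y p S
  end.

Definition NJ (G : graph) (X : ty TNs -> Prop) : Prop := exists i, Nlev G i X.

End Semantics.

(** Once (PE) holds, every frontier pair must be filled, and by Σ^TP the new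
    object carries every type of the corresponding set in N_0; iterating, each
    X ∈ N_J is contained in the types of a single node of any solution K ⊇ J.
    A set containing both Literal and some T ∈ 𝒯 would thus give a node typed
    both as a literal and as a non-literal, which a typed graph forbids.
    Neither the instance I nor the constraints satisfied by J play any role. *)

From Stdlib Require Import List.

Section Realization.
Context {D : domains} (E : setting D).
Local Notation graph := (typed_graph D (TN (SS E))).

Definition realized (K : graph) (X : ty (TN (SS E)) -> Prop) : Prop :=
  exists m, forall S, X S -> In (tyfact E S m) K.

Lemma realized_Delta (K : graph) (Y : ty (TN (SS E)) -> Prop) p :
  sat_TP E K -> sat_PE E K -> realized K Y -> Req E Y p ->
  realized K (Delta E Y p).
Proof.
  intros HTP HPE [m Hm] [T [S [mu [HT [Hd Hreq]]]]].
  destruct (HPE T p S mu Hd Hreq m (Hm _ HT)) as [y Hy].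
  exists y. intros S' [T' [mu' [HT' Hd']]].
  exact (HTP T' p S' mu' Hd' m y (Hm _ HT') Hy).
Qed.

Lemma realized_ext (K : graph) {X Y : ty (TN (SS E)) -> Prop} :
  (forall S, X S <-> Y S) -> realized K Y -> realized K X.
Proof.
  intros HXY [m Hm]. exists m. intros S HS. apply Hm, HXY, HS.
Qed.

Lemma types_realized {J K : graph} (n : node D) :
  incl J K -> realized K (types E J n).
Proof.
  intros HJK. exists n. intros S HS. exact (HJK _ HS).
Qed.

Lemma Nlev_realized {J K : graph} :
  incl J K -> sat_TP E K -> sat_PE E K ->
  forall i X, Nlev E J i X -> realized K X.
Proof.
  intros HJK HTP HPE i. induction i as [|i IH]; intros X HX; simpl in HX.
  - destruct HX as [n [p [[_ [Hreq _]] HX]]].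
    apply (realized_ext K HX), realized_Delta; auto using types_realized.
  - destruct HX as [Y [p [HY [Hreq HX]]]].
    apply (realized_ext K HX), realized_Delta; auto.
Qed.

Lemma wf_not_lit_and_typed {K : graph} {T : TN (SS E)} {m : node D} :
  typed_graph_wf K -> In (LitF m) K -> ~ In (TypeF T m) K.
Proof.
  intros Hwf Hlit Htyp. exact (Hwf _ Htyp (Hwf _ Hlit)).
Qed.

End Realization.

Theorem lemma6 (D : domains) (E : setting D)
    (I : instance (RS E) (Lit D)) (J : typed_graph D (TN (SS E))) :
  instance_of I ->
  solution_st_TP_PF E I J ->
  (exists X, NJ E J X /\ X TyLit /\ exists T, X (TyT T)) ->
  ~ (exists K, solution_E E I K /\ incl J K).
Proof.
  intros _ _ [X [[i Hi] [Hlit [T HT]]]] [K [[Hwf [_ [HTP [_ HPE]]]] HJK]].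
  destruct (Nlev_realized E HJK HTP HPE i X Hi) as [m Hm].
  exact (wf_not_lit_and_typed E Hwf (Hm _ Hlit) (Hm _ HT)).
Qed.
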